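(* Let $\beta\ge0$. If a symmetric restaking network $G$ admits a $\beta$-costly attack, then it admits a $\beta$-costly attack that is consolidated.
   Context: A restaking network is a tuple $G=(V,S,\sigma,w,\theta,\pi)$ with finite nonempty validator set $V$, finite service set $S$, stake $\sigma:V\to\mathbb{R}_{>0}$, allocation $w:V\times S\to\mathbb{R}_{\ge0}$ with $w(v,s)\le\sigma(v)$, thresholds $\theta:S\to[0,1]$, prizes $\pi:S\to\mathbb{R}_{>0}$. An attack is $\alpha:V\times S\to\mathbb{R}_{\ge0}$ with $\alpha(v,s)\le w(v,s)$; attacked services $S_\alpha=\{s:\sum_v\alpha(v,s)\ge\theta(s)\sum_v w(v,s)\}$; validator cost $c_v(\alpha)=\min(\sigma(v),\sum_{s\in S_\alpha}\alpha(v,s))$; total cost $C(\alpha)=\sum_vc_v(\alpha)$; prize $\Pi(\alpha)=\sum_{s\in S_\alpha}\pi(s)$. $\beta$-costly: $S_\alpha\ne\emptyset$ and $C(\alpha)\le\Pi(\alpha)+\beta$. $G$ is symmetric if all validators have the same stake $\sigma$, for each $s$ all validators have the same allocation $w(s)$, and all services have the same threshold $\theta$. Let $m=|V|$ and $V=\{v_1,\dots,v_m\}$ (any ordering). An attack is consolidated if for every $s\in S_\alpha$ and $i\in\{1,\dots,m\}$: $\alpha(v_i,s)=w(s)$ if $i\le\lfloor\theta m\rfloor$; $\alpha(v_i,s)=(\theta m-\lfloor\theta m\rfloor)w(s)$ if $i=\lfloor\theta m\rfloor+1$; $\alpha(v_i,s)=0$ otherwise. *)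

From HB Require Import structures.
From mathcomp Require Import all_boot all_order all_algebra.
From mathcomp Require Import reals.
Set Implicit Arguments. Unset Strict Implicit. Unset Printing Implicit Defensive.
Import Order.TTheory GRing.Theory Num.Theory.
Local Open Scope ring_scope.

Section Restaking.
Variables (R : realType) (V S : finType).
Implicit Types (sigma : V -> R) (w alpha : V -> S -> R) (theta pi : S -> R).

Definition is_network sigma w theta pi : Prop :=
  (0 < #|V|)%N /\
  (forall v, 0 < sigma v) /\
  (forall v s, 0 <= w v s /\ w v s <= sigma v) /\
  (forall s, 0 <= theta s <= 1) /\
  (forall s, 0 < pi s).

Definition is_attack w alpha : Prop :=
  forall v s, 0 <= alpha v s /\ alpha v s <= w v s.

Definition attacked w theta alpha (s : S) : bool :=
  theta s * (\sum_v w v s) <= \sum_v alpha v s.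

Definition vcost sigma w theta alpha (v : V) : R :=
  Num.min (sigma v) (\sum_(s | attacked w theta alpha s) alpha v s).

Definition total_cost sigma w theta alpha : R :=
  \sum_v vcost sigma w theta alpha v.

Definition prize w theta pi alpha : R :=
  \sum_(s | attacked w theta alpha s) pi s.

Definition beta_costly sigma w theta pi (beta : R) alpha : Prop :=
  (exists s, attacked w theta alpha s) /\
  total_cost sigma w theta alpha <= prize w theta pi alpha + beta.

Definition symmetric_network sigma w theta : Prop :=
  (exists s0 : R, forall v, sigma v = s0) /\
  (forall s, exists ws : R, forall v, w v s = ws) /\
  (exists t0 : R, forall s, theta s = t0).

(* Consolidated w.r.t. an ordering ord : V -> 'I_m (0-based; validator v is
   v_{ord v + 1}).  In a symmetric network w v s = w(s) and theta s = theta. *)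
Definition consolidated w theta (ord : V -> 'I_#|V|) alpha : Prop :=
  forall s, attacked w theta alpha s -> forall v,
    let m := #|V| in
    let fl := Num.floor (theta s * m%:R) in
    alpha v s =
      if ((ord v)%:Z < fl)%R then w v s
      else if (ord v)%:Z == fl then (theta s * m%:R - fl%:~R) * w v s
      else 0.

End Restaking.

(* In a symmetric network, attacking each fallen service with exactly its
   threshold share theta m w(s), placed on the first validators (full
   allocation on the first floor(theta m), the fractional remainder on the
   next one), brings down the same services, hence wins the same prize.  It is
   also the cheapest way to do so: writing W for the total allocation of the
   fallen services, every validator carries a load at most W, the loads sum to
   at least theta m W, and each validator pays its load capped at the stake;
   among such load vectors the cost n min(sigma, W) + min(sigma, fr W) of the
   consolidated one (n = floor(theta m), fr = theta m - n) is minimal. *)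
From HB Require Import structures.
From mathcomp Require Import all_boot all_order all_algebra.
From mathcomp Require Import reals.
From mathcomp Require Import lra.
Set Implicit Arguments. Unset Strict Implicit. Unset Printing Implicit Defensive.
Import Order.TTheory GRing.Theory Num.Theory.
Local Open Scope ring_scope.

Definition step_profile {R : nmodType} (n : nat) (a b : R) (i : nat) : R :=
  if (i < n)%N then a else if i == n then b else 0.

Lemma step_profile_map (R : nmodType) (f : R -> R) n a b i :
  f 0 = 0 -> f (step_profile n a b i) = step_profile n (f a) (f b) i.
Proof. by move=> f0; rewrite /step_profile; case: ifP => //; case: ifP. Qed.

Lemma sum_step_profile (R : pzSemiRingType) (m n : nat) (a b : R) :
  \sum_(i < m) step_profile n a b i
  = (minn n m)%:R * a + (if (n < m)%N then b else 0).
Proof.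
rewrite /step_profile; elim: m => [|m IH]; first by rewrite big_ord0 minn0 mul0r addr0.
rewrite big_ord_recr /= IH; case: (ltngtP m n) => [mn | nm | <-].
- rewrite (minn_idPr mn) ifF; last by apply/negbTE; rewrite -leqNgt.
  by rewrite -natr1 mulrDl mul1r !addr0.
- by rewrite (minn_idPl (leqW (ltnW nm))) ltnS (ltnW nm) addr0.
- by rewrite (minn_idPl (leqnSn m)) ltnSn addr0.
Qed.

(* Validators whose load reaches the cap [c] each pay [c]; the others pay
   their whole load, which is at least what is left of [(n + fr) W]. *)
Lemma sum_min_ge_step (R : realDomainType) (V : finType) (X : V -> R)
    (c W fr : R) (n : nat) :
  0 <= c -> 0 <= fr -> (forall v, 0 <= X v <= W) ->
  (n%:R + fr) * W <= \sum_v X v ->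
  n%:R * Num.min c W + Num.min c (fr * W) <= \sum_v Num.min c (X v).
Proof.
move=> c0 fr0 XW XS.
pose capped := [pred v | c <= X v]; pose k := #|capped|.
have costE : \sum_v Num.min c (X v) = k%:R * c + \sum_(v | ~~ capped v) X v.
  rewrite (bigID capped) /= (eq_bigr (fun=> c)) => [|v /= cX]; last by rewrite minEle cX.
  rewrite sumr_const mulr_natl; congr (_ + _).
  by apply: eq_bigr => v /= cX; rewrite minEle ifN.
have cappedW : \sum_(v | capped v) X v <= k%:R * W.
  have -> : k%:R * W = \sum_(v | capped v) W by rewrite sumr_const mulr_natl.
  by apply: ler_sum => v _; case/andP: (XW v).
have rest0 : 0 <= \sum_(v | ~~ capped v) X v.
  by apply: sumr_ge0 => v _; case/andP: (XW v).
move: XS; rewrite (bigID capped) costE /= => XS.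
have [mc_c mc_W] : Num.min c W <= c /\ Num.min c W <= W.
  by rewrite !ge_min !lexx orbT.
have [mfr_c mfr_W] : Num.min c (fr * W) <= c /\ Num.min c (fr * W) <= fr * W.
  by rewrite !ge_min !lexx orbT.
case: (leqP k n) => [kn | nk].
- have kn' : n%:R >= k%:R :> R by rewrite ler_nat.
  have e1 : 0 <= (n%:R - k%:R) * (W - Num.min c W) by apply: mulr_ge0; lra.
  have e2 : 0 <= k%:R * (c - Num.min c W) by apply: mulr_ge0; [exact: ler0n | lra].
  lra.
- have nk' : n%:R + 1 <= k%:R :> R by rewrite natr1 ler_nat.
  have e1 : 0 <= (k%:R - n%:R - 1) * c by apply: mulr_ge0; lra.
  have e2 : 0 <= n%:R * (c - Num.min c W) by apply: mulr_ge0; [exact: ler0n | lra].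
  lra.
Qed.

Section SymmetricNetwork.
Variables (R : realType) (V S : finType).
Variables (sigma : V -> R) (w : V -> S -> R) (theta : S -> R).
Variables (s0 t0 : R) (wS : S -> R).
Hypothesis sigmaE : forall v, sigma v = s0.
Hypothesis wE : forall v s, w v s = wS s.
Hypothesis thetaE : forall s, theta s = t0.
Hypothesis s0_ge0 : 0 <= s0.
Hypothesis t0_ge0 : 0 <= t0.
Hypothesis t0_le1 : t0 <= 1.
Hypothesis wS_ge0 : forall s, 0 <= wS s.
Variable ord : V -> 'I_#|V|.
Hypothesis ord_bij : bijective ord.

Local Notation m := #|V|.
Let fl := Num.floor (t0 * m%:R).
Let n := `|fl|%N.
Let fr := t0 * m%:R - n%:R.

Lemma floor_threshold_nat : fl = n%:Z.
Proof. by rewrite gez0_abs // floor_ge0 mulr_ge0. Qed.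

Lemma frac_threshold_ge0 : 0 <= fr.
Proof. by have := floor_le (t0 * m%:R); rewrite -/fl floor_threshold_nat subr_ge0. Qed.

Lemma frac_threshold_lt1 : fr < 1.
Proof.
have := floorD1_gt (t0 * m%:R); rewrite -/fl floor_threshold_nat intrD /fr.
by move=> ?; lra.
Qed.

Lemma threshold_le_card : t0 * m%:R <= m%:R.
Proof. by rewrite ler_piMl. Qed.

Lemma floor_threshold_le_card : (n <= m)%N.
Proof.
rewrite -(ler_nat R); have := frac_threshold_ge0; have := threshold_le_card.
by rewrite /fr; lra.
Qed.

(* Either validator [n] exists, or all [m] validators are needed in full and
   there is no fractional part. *)
Lemma floor_threshold_ltn_or_frac0 : (n < m)%N || (fr == 0).
Proof.
case: ltnP => //= mn; apply/eqP.
have : m%:R <= n%:R :> R by rewrite ler_nat.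
have := frac_threshold_ge0; have := threshold_le_card.
by rewrite /fr; lra.
Qed.

Let coef (i : nat) : R := step_profile n 1 fr i.

Lemma coef_ge0_le1 i : 0 <= coef i <= 1.
Proof.
have := frac_threshold_ge0; have := frac_threshold_lt1.
by rewrite /coef /step_profile; case: ifP => _; [|case: ifP => _]; lra.
Qed.

Lemma sum_coef_map (f : R -> R) : f 0 = 0 ->
  \sum_v f (coef (ord v)) = n%:R * f 1 + f fr.
Proof.
move=> f0; have -> : \sum_v f (coef (ord v)) = \sum_(i < m) f (coef i).
  by rewrite (reindex ord (onW_bij _ ord_bij)).
under eq_bigr do rewrite /coef step_profile_map //.
rewrite sum_step_profile (minn_idPl floor_threshold_le_card).
case/orP: floor_threshold_ltn_or_frac0 => [nm | /eqP fr0]; first by rewrite nm.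
by rewrite fr0 f0; case: ifP.
Qed.

Lemma sum_coef : \sum_v coef (ord v) = t0 * m%:R.
Proof. by rewrite (@sum_coef_map id) // mulr1 subrKC. Qed.

Lemma sum_allocation s : \sum_v w v s = m%:R * wS s.
Proof. by rewrite (eq_bigr (fun=> wS s)) ?sumr_const ?mulr_natl. Qed.

Variable alpha : V -> S -> R.
Hypothesis alpha_attack : is_attack w alpha.
Let att := attacked w theta alpha.
Let W := \sum_(s | att s) wS s.

Let consolidate (v : V) (s : S) : R := if att s then coef (ord v) * wS s else 0.

Lemma consolidate_attack : is_attack w consolidate.
Proof.
move=> v s; rewrite /consolidate wE; case: (att s); last by rewrite lexx wS_ge0.
have /andP[c0 c1] := coef_ge0_le1 (ord v).
by rewrite mulr_ge0 ?wS_ge0 // ler_piMl ?wS_ge0.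
Qed.

Lemma attacked_consolidate : attacked w theta consolidate =1 att.
Proof.
move=> s; rewrite /attacked sum_allocation thetaE.
have -> : \sum_v consolidate v s = if att s then t0 * m%:R * wS s else 0.
  rewrite /consolidate; case: (att s); last by rewrite big1.
  by rewrite -mulr_suml sum_coef.
case atts: (att s) => /=; first by rewrite mulrA lexx.
apply/negbTE; rewrite -ltNge; apply: le_lt_trans (_ : 0 <= \sum_v alpha v s) _.
  by apply: sumr_ge0 => v _; case: (alpha_attack v s).
by move: atts; rewrite /att /attacked sum_allocation thetaE => /negbT; rewrite -ltNge.
Qed.

Lemma total_cost_consolidate :
  total_cost sigma w theta consolidate = n%:R * Num.min s0 W + Num.min s0 (fr * W).
Proof.
rewrite /total_cost (eq_bigr (fun v => Num.min s0 (coef (ord v) * W))) => [|v _].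
  by rewrite (@sum_coef_map (fun x => Num.min s0 (x * W))) ?mul1r // mul0r minEge s0_ge0.
rewrite /vcost sigmaE (eq_bigl _ _ attacked_consolidate) /W mulr_sumr.
by congr (Num.min _ _); apply: eq_bigr => s atts; rewrite /consolidate atts.
Qed.

Lemma total_cost_consolidate_le :
  total_cost sigma w theta consolidate <= total_cost sigma w theta alpha.
Proof.
rewrite total_cost_consolidate /total_cost.
under [X in _ <= X]eq_bigr do rewrite /vcost sigmaE.
apply: sum_min_ge_step => //; first exact: frac_threshold_ge0.
  move=> v; rewrite sumr_ge0 ?ler_sum // => s _; have := alpha_attack v s.
    by rewrite wE => -[].
  by case.
rewrite exchange_big /= subrKC /W mulr_sumr; apply: ler_sum => s atts.
by move: atts; rewrite /att /attacked sum_allocation thetaE mulrA.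
Qed.

Lemma consolidated_consolidate : consolidated w theta ord consolidate.
Proof.
move=> s; rewrite attacked_consolidate => atts v /=.
rewrite /consolidate atts thetaE -/fl floor_threshold_nat ltz_nat eqz_nat wE.
rewrite /coef /step_profile; case: ifP => _; first by rewrite mul1r.
by case: ifP => _ //; rewrite mul0r.
Qed.

Lemma exists_consolidated_costly (pi : S -> R) (beta : R) :
  beta_costly sigma w theta pi beta alpha ->
  exists alpha', is_attack w alpha' /\ beta_costly sigma w theta pi beta alpha' /\
    consolidated w theta ord alpha'.
Proof.
move=> [[s atts] costly]; exists consolidate.
split; first exact: consolidate_attack.
split; last exact: consolidated_consolidate.
split; first by exists s; rewrite attacked_consolidate.
have -> : prize w theta pi consolidate = prize w theta pi alpha.
  exact: eq_bigl attacked_consolidate.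
exact: le_trans total_cost_consolidate_le costly.
Qed.

End SymmetricNetwork.

Theorem mainTheorem15 (R : realType) (V S : finType)
  (sigma : V -> R) (w : V -> S -> R) (theta pi : S -> R) (beta : R)
  (ord : V -> 'I_#|V|) :
  is_network sigma w theta pi ->
  symmetric_network sigma w theta ->
  bijective ord ->
  0 <= beta ->
  (exists alpha, is_attack w alpha /\ beta_costly sigma w theta pi beta alpha) ->
  exists alpha, is_attack w alpha /\ beta_costly sigma w theta pi beta alpha /\
    consolidated w theta ord alpha.
Proof.
move=> [V_gt0 [sigma_gt0 [w_bound [theta_bound _]]]] [[s0 sigmaE] [w_sym [t0 thetaE]]]
  ord_bij _ [alpha [alpha_attack costly]].
have [v0 _] := card_gt0P V_gt0.
have wE v s : w v s = w v0 s by have [ws wsE] := w_sym s; rewrite !wsE.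
have [[s _] _] := costly.
have /andP[t0_ge0 t0_le1] : 0 <= t0 <= 1 by rewrite -(thetaE s) theta_bound.
have s0_ge0 : 0 <= s0 by rewrite -(sigmaE v0) ltW.
have wS_ge0 s' : 0 <= w v0 s' by case: (w_bound v0 s').
exact: (exists_consolidated_costly sigmaE wE thetaE s0_ge0 t0_ge0 t0_le1 wS_ge0
  ord_bij alpha_attack) _ _ costly.
Qed.
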